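(* Let $F:\mathcal{G}_{\Sigma,\Delta,\pi}\to\mathcal{G}_{\Sigma,\Delta,\pi}$ be a causal graph dynamics with a monotonic local rule $f$ of radius $r$ (so $F$ is monotonic), and assume that $\mathrm{Conj}_F(R)$ is a singleton $\{\overline{F}(R)\}$ for every renaming $R$. Then the assignment $\widetilde{f}:\mathbf{D}^r_{\Sigma,\Delta,\pi}\to\mathbf{G}_{\Sigma,\Delta,\pi}$ given on objects by $\widetilde{f}((H,\{c\}))=f((H,c))$ and $\widetilde{f}((\varnothing,\emptyset))=\varnothing$, and on a morphism $m:(H,C)\to(H',C')$ by the morphism $\widetilde{f}(m):\widetilde{f}((H,C))\to\widetilde{f}((H',C'))$ with $|\widetilde{f}(m)|=\overline{F}(|m|)$, is a well-defined functor.
   Context: Fix an uncountably infinite set $\mathcal{V}$, sets $\Sigma,\Delta$, finite $\pi$. Graphs: countable $V(G)\subset\mathcal{V}$, a set $E(G)$ of pairwise disjoint two-element subsets of $V(G)\times\pi$, partial labelings $\sigma(G),\delta(G)$; $\subseteq$ is componentwise inclusion. Renamings are bijections of $\mathcal{V}$ acting naturally on graphs and pointed graphs ($V(R(G))=R(V(G))$, edges $\{u\!:\!i,v\!:\!j\}\mapsto\{R(u)\!:\!i,R(v)\!:\!j\}$, labelings precomposed with $R^{-1}$, $R(G,v)=(R(G),R(v))$). $\mathrm{Conj}_F(R)$ is the set of renamings $R'$ with $F\circ R=R'\circ F$. Disk $G^r_c=(H,c)$: vertices at distance $\le r+1$ from $c$, edges of $G$ with an endpoint at distance $\le r$, vertex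 labels restricted to distance $\le r$, edge labels of kept edges; $\mathcal{D}^r$ the set of radius-$r$ disks, ordered by $(H,c)\subseteq(H',c')$ iff $H\subseteq H'$ and $c=c'$. A local rule of radius $r$ is $f:\mathcal{D}^r\to$ graphs with: each renaming $R$ has $R'$ with $f\circ R=R'\circ f$; families of disks with empty intersection have images with empty intersection; bounded $|V(f(D))|$; $f(G^r_u),f(G^r_v)$ consistent for all $G,u,v$. A CGD is $F(G)=\bigcup_{v\in V(G)}f(G^r_v)$. Category $\mathbf{G}_{\Sigma,\Delta,\pi}$: objects graphs, morphism $m:G\to H$ a renaming $|m|$ with $|m|(G)\subseteq H$, composition by composition of renamings. Category $\mathbf{D}^r_{\Sigma,\Delta,\pi}$: objects $(H,\{c\})$ for $(H,c)\in\mathcal{D}^r$ and $(\varnothing,\emptyset)$; morphisms $m:(H_1,C_1)\to(H_2,C_2)$ are morphisms $m:H_1\to H_2$ of $\mathbf{G}_{\Sigma,\Delta,\pi}$ with $|m|(C_1)\subseteq C_2$. *)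

From Stdlib Require Import List Arith ClassicalEpsilon.
Set Implicit Arguments.

Section CGD.
Variables (V Sig Del Pi : Type).

(** Ports and edges: an edge is a subset of V x Pi (required to be a
    two-element set in well-formed graphs). *)
Definition port := (V * Pi)%type.
Definition edge := port -> Prop.

Record graph := Graph {
  gV : V -> Prop;
  gE : edge -> Prop;
  gsig : V -> option Sig;
  gdel : edge -> option Del }.

Definition pgraph := (graph * V)%type.

Definition countable_set (A : V -> Prop) : Prop :=
  exists g : V -> nat, forall u v, A u -> A v -> g u = g v -> u = v.

Definition two_element (e : edge) : Prop :=
  exists p q : port, p <> q /\ forall x, e x <-> (x = p \/ x = q).

Definition wf (G : graph) : Prop :=
  countable_set (gV G) /\
  (forall e, gE G e -> two_element e /\ forall p, e p -> gV G (fst p)) /\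
  (forall e e', gE G e -> gE G e' -> (exists p, e p /\ e' p) -> e = e') /\
  (forall v a, gsig G v = Some a -> gV G v) /\
  (forall e a, gdel G e = Some a -> gE G e).

Definition gsub (G H : graph) : Prop :=
  (forall v, gV G v -> gV H v) /\
  (forall e, gE G e -> gE H e) /\
  (forall v a, gsig G v = Some a -> gsig H v = Some a) /\
  (forall e a, gdel G e = Some a -> gdel H e = Some a).

Definition psub (D D' : pgraph) : Prop := gsub (fst D) (fst D') /\ snd D = snd D'.

Definition empty_graph : graph :=
  Graph (fun _ => False) (fun _ => False) (fun _ => None) (fun _ => None).

Record renaming := Renaming {
  rn : V -> V;
  rn_inv : V -> V;
  rn_K : forall x, rn_inv (rn x) = x;
  rn_KV : forall x, rn (rn_inv x) = x }.

Definition rid : renaming :=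
  @Renaming (fun x => x) (fun x => x) (fun x => eq_refl) (fun x => eq_refl).

Lemma rcomp_K (R2 R1 : renaming) :
  forall x, rn_inv R1 (rn_inv R2 (rn R2 (rn R1 x))) = x.
Proof. intro x. rewrite rn_K, rn_K. reflexivity. Qed.
Lemma rcomp_KV (R2 R1 : renaming) :
  forall x, rn R2 (rn R1 (rn_inv R1 (rn_inv R2 x))) = x.
Proof. intro x. rewrite rn_KV, rn_KV. reflexivity. Qed.

Definition rcomp (R2 R1 : renaming) : renaming :=
  @Renaming (fun x => rn R2 (rn R1 x)) (fun x => rn_inv R1 (rn_inv R2 x))
    (rcomp_K R2 R1) (rcomp_KV R2 R1).

Definition edge_pre (g : V -> V) (e : edge) : edge := fun p => e (g (fst p), snd p).

(** natural action of a renaming on graphs: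
    V(R G) = R(V G), edges u:i-v:j mapped to R u:i - R v:j,
    labelings precomposed with R^-1. *)
Definition rename (R : renaming) (G : graph) : graph :=
  Graph (fun v => gV G (rn_inv R v))
        (fun e => gE G (edge_pre (rn R) e))
        (fun v => gsig G (rn_inv R v))
        (fun e => gdel G (edge_pre (rn R) e)).

Definition prename (R : renaming) (D : pgraph) : pgraph :=
  (rename R (fst D), rn R (snd D)).

Definition adj (G : graph) (u v : V) : Prop :=
  exists e i j, gE G e /\ e (u, i) /\ e (v, j).

Fixpoint dist_le (G : graph) (n : nat) (u v : V) : Prop :=
  match n with
  | 0 => gV G u /\ u = v
  | S n => dist_le G n u v \/ exists w, dist_le G n u w /\ adj G w v
  end.

Definition decP (P : Prop) : bool :=
  if excluded_middle_informative P then true else false.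

Definition disk_edges (G : graph) (r : nat) (c : V) (e : edge) : Prop :=
  gE G e /\ exists p, e p /\ dist_le G r c (fst p).

Definition disk (G : graph) (r : nat) (c : V) : pgraph :=
  (Graph (fun v => dist_le G (S r) c v)
         (disk_edges G r c)
         (fun v => if decP (dist_le G r c v) then gsig G v else None)
         (fun e => if decP (disk_edges G r c e) then gdel G e else None),
   c).

Definition is_disk (r : nat) (D : pgraph) : Prop :=
  exists G c, wf G /\ gV G c /\ D = disk G r c.

(** consistency of two graphs (their union is a graph) *)
Definition consistent (G H : graph) : Prop :=
  (forall e e', gE G e -> gE H e' -> (exists p, e p /\ e' p) -> e = e') /\
  (forall v a b, gsig G v = Some a -> gsig H v = Some b -> a = b) /\
  (forall e a b, gdel G e = Some a -> gdel H e = Some b -> a = b).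

Definition local_rule (r : nat) (f : pgraph -> graph) : Prop :=
  (forall D, is_disk r D -> wf (f D)) /\
  (forall R : renaming, exists R' : renaming,
     forall D, is_disk r D -> f (prename R D) = rename R' (f D)) /\
  (forall S : pgraph -> Prop, (forall D, S D -> is_disk r D) ->
     (forall v, ~ (forall D, S D -> gV (fst D) v)) ->
     (forall v, ~ (forall D, S D -> gV (f D) v))) /\
  (exists b : nat, forall D, is_disk r D ->
     exists l : list V, length l <= b /\ forall v, gV (f D) v -> In v l) /\
  (forall G u v, wf G -> gV G u -> gV G v ->
     consistent (f (disk G r u)) (f (disk G r v))).

Definition monotonic_rule (r : nat) (f : pgraph -> graph) : Prop :=
  forall D D', is_disk r D -> is_disk r D' -> psub D D' -> gsub (f D) (f D').

Definition pick_opt {A : Type} (P : A -> Prop) : option A :=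
  match excluded_middle_informative (exists a, P a) with
  | left h => Some (proj1_sig (constructive_indefinite_description _ h))
  | right _ => None
  end.

Definition gunion {I : Type} (P : I -> Prop) (Gs : I -> graph) : graph :=
  Graph (fun v => exists i, P i /\ gV (Gs i) v)
        (fun e => exists i, P i /\ gE (Gs i) e)
        (fun v => pick_opt (fun a => exists i, P i /\ gsig (Gs i) v = Some a))
        (fun e => pick_opt (fun a => exists i, P i /\ gdel (Gs i) e = Some a)).

Definition CGD (r : nat) (f : pgraph -> graph) (G : graph) : graph :=
  gunion (fun v => gV G v) (fun v => f (disk G r v)).

Definition Conj (F : graph -> graph) (R : renaming) (R' : renaming) : Prop :=
  forall G, wf G -> F (rename R G) = rename R' (F G).

Definition Gmor (G H : graph) (m : renaming) : Prop :=
  wf G /\ wf H /\ gsub (rename m G) H.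

(** Category D^r: objects (H,{c}) (encoded (H, Some c)) and (empty, emptyset)
    (encoded (empty_graph, None)). *)
Definition Dobject := (graph * option V)%type.

Definition Dobj (r : nat) (X : Dobject) : Prop :=
  (exists c, snd X = Some c /\ is_disk r (fst X, c)) \/ X = (empty_graph, None).

Definition Dmor (r : nat) (X Y : Dobject) (m : renaming) : Prop :=
  Dobj r X /\ Dobj r Y /\ Gmor (fst X) (fst Y) m /\
  (forall c, snd X = Some c -> snd Y = Some (rn m c)).

Definition ftilde_obj (f : pgraph -> graph) (X : Dobject) : graph :=
  match snd X with
  | Some c => f (fst X, c)
  | None => empty_graph
  end.

Definition ftilde_is_functor (r : nat) (f : pgraph -> graph)
    (Fbar : renaming -> renaming) : Prop :=
  (forall X, Dobj r X -> wf (ftilde_obj f X)) /\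
  (forall X Y m, Dmor r X Y m -> Gmor (ftilde_obj f X) (ftilde_obj f Y) (Fbar m)) /\
  (forall X, Dobj r X -> Fbar rid = rid) /\
  (forall X Y Z m1 m2, Dmor r X Y m1 -> Dmor r Y Z m2 ->
     Fbar (rcomp m2 m1) = rcomp (Fbar m2) (Fbar m1)).

End CGD.

Definition uncountable (V : Type) : Prop :=
  ~ exists g : V -> nat, forall u v, g u = g v -> u = v.

Definition finite_type (T : Type) : Prop := exists l : list T, forall x, In x l.

(* Renaming commutes with taking disks, so a conjugate R' of R for the local
   rule f (which exists since f is a local rule) is also a conjugate of R for
   the global map F; by uniqueness it is Fbar R.  Hence f (R D) = Fbar R (f D),
   and monotonicity of f turns an inclusion R H <= H' of disks into an
   inclusion Fbar R (f H) <= f H'.  Uniqueness of conjugates also yields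
   Fbar id = id and Fbar (R2 o R1) = Fbar R2 o Fbar R1, since the right-hand
   sides are conjugates of the left-hand renamings. *)
From Stdlib Require Import List Arith ClassicalEpsilon.
From Stdlib Require Import FunctionalExtensionality PropExtensionality.
Set Implicit Arguments.

Section Renamings.
Variables (V Sig Del Pi : Type).
Implicit Types (G H : graph V Sig Del Pi) (R : renaming V) (e : edge V Pi).

Lemma graph_ext G H :
  gV G = gV H -> gE G = gE H -> gsig G = gsig H -> gdel G = gdel H -> G = H.
Proof. destruct G, H; simpl; intros; subst; reflexivity. Qed.

Lemma rn_inj R a b : rn R a = rn R b -> a = b.
Proof. intro E. rewrite <- (rn_K R a), <- (rn_K R b), E. reflexivity. Qed.

Lemma edge_pre_id e : edge_pre (fun x => x) e = e.
Proof. apply functional_extensionality; intros [x i]; reflexivity. Qed.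

Lemma edge_pre_rnK R e : edge_pre (rn R) (edge_pre (rn_inv R) e) = e.
Proof.
  apply functional_extensionality; intros [x i]; unfold edge_pre; simpl.
  rewrite rn_K; reflexivity.
Qed.

Lemma edge_pre_rn_invK R e : edge_pre (rn_inv R) (edge_pre (rn R) e) = e.
Proof.
  apply functional_extensionality; intros [x i]; unfold edge_pre; simpl.
  rewrite rn_KV; reflexivity.
Qed.

Lemma rename_rid G : rename (rid V) G = G.
Proof.
  apply graph_ext; try reflexivity; apply functional_extensionality; intro e;
    simpl; rewrite edge_pre_id; reflexivity.
Qed.

Lemma gsub_empty_graph G : gsub (empty_graph V Sig Del Pi) G.
Proof. repeat split; simpl; intros; try contradiction; discriminate. Qed.

Lemma two_element_edge_pre_inv R e :
  two_element e -> two_element (edge_pre (rn_inv R) e).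
Proof.
  intros [[p1 p2] [[q1 q2] [Hpq He]]].
  exists (rn R p1, p2), (rn R q1, q2); split.
  - intro E; injection E as E1 E2; apply Hpq.
    rewrite (rn_inj R _ _ E1), E2; reflexivity.
  - intros [x i]; unfold edge_pre; simpl; rewrite He.
    split; intros [E | E]; injection E as E1 E2; subst;
      rewrite ?rn_K, ?rn_KV; auto.
Qed.

Lemma wf_rename R G : wf G -> wf (rename R G).
Proof.
  intros [[g Hg] [Hedge [Hdisj [Hsig Hdel]]]].
  split; [| split; [| split; [| split]]].
  - exists (fun v => g (rn_inv R v)); intros u v Hu Hv E.
    rewrite <- (rn_KV R u), <- (rn_KV R v), (Hg _ _ Hu Hv E); reflexivity.
  - intros e He; destruct (Hedge _ He) as [Htwo Hends]; split.
    + rewrite <- (edge_pre_rn_invK R e); apply two_element_edge_pre_inv, Htwo.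
    + intros [x i] Hx; apply (Hends (rn_inv R x, i)); simpl.
      unfold edge_pre; simpl; rewrite rn_KV; exact Hx.
  - intros e e' He He' [[x i] [Hx Hx']].
    rewrite <- (edge_pre_rn_invK R e), <- (edge_pre_rn_invK R e').
    f_equal; apply Hdisj; auto.
    exists (rn_inv R x, i); unfold edge_pre; simpl; rewrite rn_KV; auto.
  - intros v a Hv; exact (Hsig _ _ Hv).
  - intros e a He; exact (Hdel _ _ He).
Qed.

Lemma wf_empty_graph : wf (empty_graph V Sig Del Pi).
Proof.
  split; [exists (fun _ => 0); intros; contradiction |].
  repeat split; simpl; intros; try contradiction; discriminate.
Qed.

Lemma adj_rename R G a b :
  adj (rename R G) a b <-> adj G (rn_inv R a) (rn_inv R b).
Proof.
  split; intros [e [i [j [He [Ha Hb]]]]].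
  - exists (edge_pre (rn R) e), i, j; unfold edge_pre; simpl.
    rewrite !rn_KV; auto.
  - exists (edge_pre (rn_inv R) e), i, j; split; [| auto].
    simpl; rewrite edge_pre_rnK; exact He.
Qed.

Lemma dist_le_rename R G n a b :
  dist_le (rename R G) n a b <-> dist_le G n (rn_inv R a) (rn_inv R b).
Proof.
  revert b; induction n as [| n IHn]; intro b; simpl.
  - split; intros [Ha E]; split; auto.
    + subst; reflexivity.
    + rewrite <- (rn_KV R a), <- (rn_KV R b), E; reflexivity.
  - rewrite IHn; split; intros [Hn | [w [Hw Hadj]]]; auto; right.
    + exists (rn_inv R w); rewrite <- IHn, <- adj_rename; auto.
    + exists (rn R w); rewrite IHn, adj_rename, rn_K; auto.
Qed.

Lemma disk_edges_rename R G r c e :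
  disk_edges (rename R G) r (rn R c) e <-> disk_edges G r c (edge_pre (rn R) e).
Proof.
  unfold disk_edges; split; intros [He [[x i] [Hx Hd]]]; split; auto; simpl in *.
  - exists (rn_inv R x, i); unfold edge_pre; simpl; rewrite rn_KV.
    rewrite dist_le_rename, rn_K in Hd; auto.
  - exists (rn R x, i); rewrite dist_le_rename; simpl; rewrite !rn_K; auto.
Qed.

Lemma disk_rename R G r c :
  disk (rename R G) r (rn R c) = prename R (disk G r c).
Proof.
  assert (Hdist : forall n v,
    dist_le (rename R G) n (rn R c) v = dist_le G n c (rn_inv R v)).
  { intros n v; apply propositional_extensionality.
    rewrite dist_le_rename, rn_K; reflexivity. }
  assert (Hedges : forall e,
    disk_edges (rename R G) r (rn R c) e = disk_edges G r c (edge_pre (rn R) e)).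
  { intro e; apply propositional_extensionality, disk_edges_rename. }
  unfold disk, prename; cbn [fst]; f_equal.
  apply graph_ext; cbn [gV gE gsig gdel rename]; apply functional_extensionality; intro x;
    rewrite ?Hdist, ?Hedges; reflexivity.
Qed.

Lemma is_disk_prename r R (D : pgraph V Sig Del Pi) : is_disk r D -> is_disk r (prename R D).
Proof.
  intros [G [c [HG [Hc ->]]]].
  exists (rename R G), (rn R c); split; [| split].
  - apply wf_rename, HG.
  - simpl; rewrite rn_K; exact Hc.
  - rewrite disk_rename; reflexivity.
Qed.

Lemma gunion_rename {I : Type} R (P : I -> Prop) (Gs : I -> graph V Sig Del Pi) :
  rename R (gunion P Gs) = gunion P (fun i => rename R (Gs i)).
Proof. reflexivity. Qed.

Lemma gunion_eq {I J : Type} (P : I -> Prop) (Q : J -> Prop)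
    (Gs : I -> graph V Sig Del Pi) (Hs : J -> graph V Sig Del Pi) :
  (forall Phi : graph V Sig Del Pi -> Prop,
     (exists i, P i /\ Phi (Gs i)) <-> (exists j, Q j /\ Phi (Hs j))) ->
  gunion P Gs = gunion Q Hs.
Proof.
  intro Hiff.
  assert (E : forall Phi, (exists i, P i /\ Phi (Gs i)) = (exists j, Q j /\ Phi (Hs j)))
    by (intro Phi; apply propositional_extensionality, Hiff).
  apply graph_ext; simpl; apply functional_extensionality; intro x.
  - exact (E (fun X => gV X x)).
  - exact (E (fun X => gE X x)).
  - f_equal; apply functional_extensionality; intro a.
    exact (E (fun X => gsig X x = Some a)).
  - f_equal; apply functional_extensionality; intro a.
    exact (E (fun X => gdel X x = Some a)).
Qed.

Lemma Conj_CGD_of_local r (f : pgraph V Sig Del Pi -> graph V Sig Del Pi) R R' :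
  (forall D, is_disk r D -> f (prename R D) = rename R' (f D)) ->
  Conj (CGD r f) R R'.
Proof.
  intros Hloc G HG; unfold CGD; rewrite gunion_rename.
  apply gunion_eq; intro Phi; simpl; split.
  - intros [i [Hi HPhi]]; exists (rn_inv R i); split; [exact Hi |].
    rewrite <- Hloc by (exists G, (rn_inv R i); auto).
    rewrite <- disk_rename, rn_KV; exact HPhi.
  - intros [u [Hu HPhi]]; exists (rn R u); rewrite rn_K; split; [exact Hu |].
    rewrite disk_rename, Hloc by (exists G, u; auto); exact HPhi.
Qed.

End Renamings.

Section ConjugateRenamings.
Variables (V Sig Del Pi : Type) (r : nat).
Variables (f : pgraph V Sig Del Pi -> graph V Sig Del Pi) (Fbar : renaming V -> renaming V).
Implicit Types (R : renaming V) (D : pgraph V Sig Del Pi) (X Y : Dobject V Sig Del Pi).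
Hypothesis Fbar_unique : forall R R' : renaming V, Conj (CGD r f) R R' <-> R' = Fbar R.

Lemma Conj_Fbar R : Conj (CGD r f) R (Fbar R).
Proof. apply Fbar_unique; reflexivity. Qed.

Lemma Fbar_rid : Fbar (rid V) = rid V.
Proof.
  symmetry; apply Fbar_unique; intros G HG.
  rewrite !rename_rid; reflexivity.
Qed.

Lemma Fbar_rcomp R2 R1 : Fbar (rcomp R2 R1) = rcomp (Fbar R2) (Fbar R1).
Proof.
  symmetry; apply Fbar_unique; intros G HG.
  change (rename (rcomp R2 R1) G) with (rename R2 (rename R1 G)).
  rewrite Conj_Fbar by (apply wf_rename, HG).
  rewrite Conj_Fbar by exact HG.
  reflexivity.
Qed.

Hypothesis f_equivariant : forall R : renaming V, exists R' : renaming V,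
  forall D, is_disk r D -> f (prename R D) = rename R' (f D).

Lemma f_prename R D : is_disk r D -> f (prename R D) = rename (Fbar R) (f D).
Proof.
  destruct (f_equivariant R) as [R' HR'].
  replace (Fbar R) with R' by (apply Fbar_unique, Conj_CGD_of_local, HR').
  apply HR'.
Qed.

Hypothesis f_wf : forall D, is_disk r D -> wf (f D).
Hypothesis f_mono : monotonic_rule r f.

Lemma Dobj_is_disk X c : Dobj r X -> snd X = Some c -> is_disk r (fst X, c).
Proof.
  intros [[c' [Hc' HD]] | ->] Hc; [| discriminate].
  rewrite Hc in Hc'; injection Hc' as ->; exact HD.
Qed.

Lemma wf_ftilde_obj X : Dobj r X -> wf (ftilde_obj f X).
Proof.
  intros [[c [Hc HD]] | ->]; unfold ftilde_obj.
  - rewrite Hc; apply f_wf, HD.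
  - apply wf_empty_graph.
Qed.

Lemma Gmor_ftilde X Y m :
  Dmor r X Y m -> Gmor (ftilde_obj f X) (ftilde_obj f Y) (Fbar m).
Proof.
  intros [HX [HY [[_ [_ Hsub]] Hcenter]]].
  split; [apply wf_ftilde_obj, HX | split; [apply wf_ftilde_obj, HY |]].
  destruct X as [H [c |]]; unfold ftilde_obj; simpl.
  - pose proof (Hcenter c eq_refl) as Hc'; rewrite Hc'.
    assert (HD : is_disk r (H, c)) by exact (Dobj_is_disk HX eq_refl).
    rewrite <- f_prename by exact HD.
    apply f_mono; [apply is_disk_prename, HD | exact (Dobj_is_disk HY Hc') |].
    split; [exact Hsub | reflexivity].
  - apply gsub_empty_graph.
Qed.

End ConjugateRenamings.

Theorem proposition4p19 (V Sig Del Pi : Type)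
  (HV : uncountable V) (HPi : finite_type Pi)
  (r : nat) (f : pgraph V Sig Del Pi -> graph V Sig Del Pi)
  (Fbar : renaming V -> renaming V)
  (Hf : local_rule r f) (Hmono : monotonic_rule r f)
  (HConj : forall R R' : renaming V, Conj (CGD r f) R R' <-> R' = Fbar R) :
  ftilde_is_functor r f Fbar.
Proof.
  destruct Hf as [Hwf [Hequiv _]].
  split; [| split; [| split]].
  - exact (wf_ftilde_obj f Hwf).
  - exact (Gmor_ftilde Fbar HConj Hequiv Hwf Hmono).
  - intros X _; exact (Fbar_rid Fbar HConj).
  - intros X Y Z m1 m2 _ _; exact (Fbar_rcomp Fbar HConj m2 m1).
Qed.
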